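(* Let $A,B,C$ be convex ($1$-convex) sets of real numbers with $|A|=|B|=|C|=N$. Then the number of solutions of $a+b=c$ with $a\in A$, $b\in B$, $c\in C$ is $\ll N^{5/3}$.
   Context: A finite set $A=\{a_1<\dots<a_N\}\subset\mathbb{R}$ is convex ($1$-convex) if the sequence of gaps $a_{i+1}-a_i$, $1\leq i\leq N-1$, is strictly monotone. *)

From HB Require Import structures.
From mathcomp Require Import all_boot all_order all_algebra.
From mathcomp Require Import finmap.
From mathcomp Require Import all_classical all_reals all_analysis.
Set Implicit Arguments. Unset Strict Implicit. Unset Printing Implicit Defensive.
Import Order.TTheory GRing.Theory Num.Theory.
Local Open Scope ring_scope.
Local Open Scope fset_scope.

Definition sorted_elems (R : realType) (A : {fset R}) : seq R :=
  sort <=%R (enum_fset A).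

Definition gaps (R : realType) (s : seq R) : seq R :=
  [seq s`_i.+1 - s`_i | i <- iota 0 (size s).-1].

Definition one_convex (R : realType) (A : {fset R}) : Prop :=
  sorted <%R (gaps (sorted_elems A)) \/ sorted >%R (gaps (sorted_elems A)).

Definition num_solutions (R : realType) (A B C : {fset R}) : nat :=
  \sum_(a <- enum_fset A) \sum_(b <- enum_fset B) \sum_(c <- enum_fset C)
     nat_of_bool ((a + b)%R == c).

From HB Require Import structures.
From mathcomp Require Import all_boot all_order all_algebra.
From mathcomp Require Import finmap.
From mathcomp Require Import all_classical all_reals all_analysis.
From mathcomp Require Import zify ring lra.
Import Order.TTheory GRing.Theory Num.Theory.

(* Write b_0 < ... < b_(N-1) and
   c_0 < ... < c_(N-1) for the sorted elements of B and C, and fix a block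
   size k > 0.  For a fixed a, the solutions (j, l) of a + b_j = c_l are
   increasing in both coordinates.  Call a solution isolated when no other
   solution lies at offset (u, v) with 0 < u, v < k.  Between two isolated
   solutions j + l grows by at least k, so there are at most 2N/k + 1 of
   them.  Every other solution starts a close pair (j, l), (j + u, l + v),
   which forces c_(l+v) - c_l = b_(j+u) - b_j; since a = c_l - b_j is
   determined by (j, l), and convexity makes l |-> c_(l+v) - c_l injective,
   the close pairs over all a number at most N k^2.  Hence
   #solutions <= N (2N/k + 1) + N k^2, and k = floor (N^(1/3)) + 1 gives
   #solutions <= 7 N^(5/3). *)

Lemma sum_bool_card {T : finType} (P : pred T) :
  (\sum_(i : T) (P i : nat))%N = #|P|.
Proof. by rewrite -sum1_card [RHS]big_mkcond; exact: eq_bigr. Qed.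

Lemma sum_bool_le1 {T : finType} (P : pred T) :
  {in P &, forall i j, i = j} -> (\sum_(i : T) (P i : nat) <= 1)%N.
Proof.
by move=> uniqP; rewrite sum_bool_card; apply/card_le1_eqP => x y xP yP; apply: uniqP.
Qed.

Lemma sum_eq_uniq_le1 (T : eqType) (s : seq T) (x : T) :
  uniq s -> (\sum_(y <- s) (y == x : nat) <= 1)%N.
Proof.
move=> us; have -> : (\sum_(y <- s) (y == x : nat))%N = count_mem x s.
  by rewrite -sum1_count [RHS]big_mkcond.
by rewrite count_uniq_mem //; case: (x \in s).
Qed.

Section StepDifferences.
Context {R : realFieldType}.
Local Open Scope ring_scope.

Definition convex_on (c : nat -> R) (N : nat) :=
  forall i i', (i < i')%N -> (i'.+1 < N)%N -> c i.+1 - c i < c i'.+1 - c i'.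

Lemma step_diff_increasing {c N v l l'} : convex_on c N ->
  (0 < v)%N -> (l < l')%N -> (l' + v < N)%N ->
  c (l + v)%N - c l < c (l' + v)%N - c l'.
Proof.
move=> cvx; elim: v l l' => [//|[|w] IH] l l' _ ll' lvN.
  by rewrite !addn1 in lvN *; apply: cvx.
have split_last m : c (m + w.+2)%N - c m =
    (c (m + w.+1)%N - c m) + (c (m + w.+1).+1 - c (m + w.+1)%N).
  by rewrite addnS; lra.
rewrite !split_last; apply: ltrD; first by apply: IH; lia.
by apply: cvx; lia.
Qed.

Lemma step_diff_inj {c N v l l'} : convex_on c N \/ convex_on (fun i => - c i) N ->
  (0 < v)%N -> (l + v < N)%N -> (l' + v < N)%N ->
  c (l + v)%N - c l = c (l' + v)%N - c l' -> l = l'.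
Proof.
move=> cvx v0; wlog ll' : l l' / (l <= l')%N.
  by move=> H; case: (leqP l l') => [|/ltnW] h lN l'N e; [|symmetry]; apply: H.
move=> lN l'N e; rewrite leq_eqVlt in ll'; case/orP: ll' => [/eqP //|ll']; exfalso.
case: cvx => /step_diff_increasing/(_ v0 ll' l'N); first by rewrite e ltxx.
by lra.
Qed.

End StepDifferences.

Section SortedEnumeration.
Context {R : realType}.
Local Open Scope ring_scope.

Lemma sum_sorted_elems (B : {fset R}) (F : R -> nat) :
  (\sum_(x <- enum_fset B) F x =
   \sum_(j < #|` B|%fset) F (nth 0%R (sorted_elems B) j))%N.
Proof.
rewrite (perm_big (sorted_elems B)); last by rewrite perm_sym perm_sort.
by rewrite (big_nth 0) big_mkord /sorted_elems size_sort.
Qed.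

Lemma sorted_elems_increasing (B : {fset R}) (j j' : nat) :
  (j < j')%N -> (j' < #|` B|%fset)%N -> (sorted_elems B)`_j < (sorted_elems B)`_j'.
Proof.
move=> jj' j'B; have sortB : sorted <%R (sorted_elems B).
  by rewrite lt_sorted_uniq_le sort_uniq fset_uniq sort_sorted //; apply: le_total.
apply: (sorted_ltn_nth lt_trans 0 sortB) => //; rewrite inE size_sort //.
exact: ltn_trans j'B.
Qed.

Lemma one_convex_gaps (C : {fset R}) : one_convex C ->
  let c := fun l => (sorted_elems C)`_l in
  convex_on c #|` C|%fset \/ convex_on (fun l => - c l) #|` C|%fset.
Proof.
set s := sorted_elems C => cvx c.
have size_s : size s = #|` C|%fset by rewrite size_sort.
have gapsE i : (i.+1 < size s)%N -> (gaps s)`_i = c i.+1 - c i.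
  by move=> hi; rewrite (nth_map 0%N) ?size_iota ?nth_iota //; lia.
have in_gaps i : (i.+1 < size s)%N -> i \in [pred n | (n < size (gaps s))%N].
  by move=> hi; rewrite inE size_map size_iota; lia.
rewrite -size_s; case: cvx => srt; [left | right] => i i' ii' hi';
  have hi : (i.+1 < size s)%N by lia.
- by have := sorted_ltn_nth lt_trans 0 srt i i' (in_gaps i hi) (in_gaps i' hi') ii';
    rewrite !gapsE.
- have gt_trans : transitive (>%R : rel R) by move=> x y z h1 h2; apply: lt_trans h2 h1.
  have := sorted_ltn_nth gt_trans 0 srt i i' (in_gaps i hi) (in_gaps i' hi') ii'.
  by rewrite !gapsE //= => lt_gaps; lra.
Qed.

End SortedEnumeration.

Section SolutionCounting.
Context {R : realFieldType}.
Variables (N : nat) (b c : nat -> R).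
Hypothesis b_incr : forall j j', (j < j')%N -> (j' < N)%N -> (b j < b j')%R.
Hypothesis c_incr : forall l l', (l < l')%N -> (l' < N)%N -> (c l < c l')%R.

Local Open Scope ring_scope.

Definition sol (a : R) (j l : nat) := [&& (j < N)%N, (l < N)%N & a + b j == c l].

Lemma sol_increasing {a j l j' l'} :
  sol a j l -> sol a j' l' -> (j < j')%N -> (l < l')%N.
Proof.
case/and3P=> _ lN /eqP e; case/and3P=> j'N _ /eqP e' jj'.
rewrite ltnNge; apply/negP => l'l; have := b_incr _ _ jj' j'N.
rewrite -(ltrD2l a) e e'; move: l'l; rewrite leq_eqVlt => /predU1P [-> | l'l].
  by rewrite ltxx.
by rewrite (lt_gtF (c_incr _ _ l'l lN)).
Qed.

Lemma sol_row_unique {a j l l'} : sol a j l -> sol a j l' -> l = l'.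
Proof.
case/and3P=> _ lN /eqP e; case/and3P=> _ l'N /eqP e'.
have c_eq : c l = c l' by rewrite -e -e'.
by case: (ltngtP l l') => // h; [have := c_incr _ _ h l'N | have := c_incr _ _ h lN];
  rewrite c_eq ltxx.
Qed.

Definition close_successor (K : nat) (a : R) (j l : nat) :=
  [exists u : 'I_K, exists v : 'I_K, [&& (0 < u)%N, (0 < v)%N & sol a (j + u) (l + v)]].

Definition isolated (K : nat) (a : R) (j l : nat) :=
  sol a j l && ~~ close_successor K a j l.

Lemma isolated_gap {K a j l j' l'} :
  isolated K a j l -> sol a j' l' -> (j < j')%N -> (j + l + K <= j' + l')%N.
Proof.
case/andP=> sjl no_succ sj'l' jj'; have ll' := sol_increasing sjl sj'l' jj'.
case: (leqP K (j' - j)) => [|ju]; first lia.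
case: (leqP K (l' - l)) => [|lv]; first lia.
case/negP: no_succ; apply/existsP; exists (Ordinal ju); apply/existsP; exists (Ordinal lv).
by rewrite /= !subn_gt0 jj' ll' !subnKC ?(ltnW jj') ?(ltnW ll').
Qed.

(* Hence j + l sits in distinct blocks of length K for distinct isolated
   solutions: there are at most 2N/K + 1 of them. *)
Lemma isolated_count K a : (0 < K)%N ->
  (\sum_(j < N) \sum_(l < N) (isolated K a j l : nat) <= ((2 * N) %/ K).+1)%N.
Proof.
move=> K0; pose P := [pred p : 'I_N * 'I_N | isolated K a p.1 p.2].
rewrite pair_big /= (sum_bool_card P).
pose f (p : 'I_N * 'I_N) : 'I_((2 * N) %/ K).+1 := inord ((p.1 + p.2) %/ K).
suff f_inj : {in P &, injective f}.
  by rewrite -(card_in_imset f_inj); apply: leq_trans (max_card _) _; rewrite card_ord.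
have f_val p : (f p : nat) = ((p.1 + p.2) %/ K)%N.
  rewrite /f inordK // ltnS leq_div2r //; have := ltn_ord p.1; have := ltn_ord p.2; lia.
move=> p q; wlog le_pq : p q / (p.1 <= q.1)%N.
  by move=> H Pp Pq e; case: (leqP p.1 q.1) => [|/ltnW] h; [|symmetry]; apply: H.
move=> Pp Pq /(congr1 (@nat_of_ord _)); rewrite !f_val; move: Pp Pq le_pq.
case: p q => [j l] [j' l']; rewrite !inE /= leq_eqVlt => iso iso' /predU1P [eq_j | jj'] blk.
  move/val_inj: eq_j iso' => <- iso'.
  by have /val_inj -> := sol_row_unique (andP iso).1 (andP iso').1.
have := leq_div2r K (isolated_gap iso (andP iso').1 jj').
by rewrite divnDr ?dvdnn // divnn K0 blk addn1 ltnn.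
Qed.

Definition close_pair (a : R) (j l u v : nat) :=
  [&& (0 < u)%N, (0 < v)%N, sol a j l & sol a (j + u) (l + v)].

Lemma solutions_split K a :
  (\sum_(j < N) \sum_(l < N) ((a + b j == c l)%R : nat) <=
   \sum_(j < N) \sum_(l < N) (isolated K a j l : nat) +
   \sum_(j < N) \sum_(l < N) \sum_(u < K) \sum_(v < K) (close_pair a j l u v : nat))%N.
Proof.
rewrite -big_split; apply: leq_sum => j _; rewrite -big_split; apply: leq_sum => l _ /=.
have -> : (a + b j == c l) = sol a j l by rewrite /sol !ltn_ord.
rewrite /isolated; case sjl: (sol a j l) => //=.
case/boolP: (close_successor K a j l) => //= /existsP [u /existsP [v /and3P [u0 v0 s]]].
by rewrite (bigD1 u) //= (bigD1 v) //= /close_pair u0 v0 sjl s.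
Qed.

Definition difference_match (j l u v : nat) :=
  [&& (0 < u)%N, (0 < v)%N, (j + u < N)%N, (l + v < N)%N &
      c (l + v)%N - c l == b (j + u)%N - b j].

(* A close pair determines a = c_l - b_j and forces a difference match. *)
Lemma close_pair_sum (A : seq R) j l u v : uniq A ->
  (\sum_(a <- A) (close_pair a j l u v : nat) <= difference_match j l u v)%N.
Proof.
move=> uA; apply: (@leq_trans
    (\sum_(a <- A) ((a == c l - b j)%R : nat) * difference_match j l u v)%N).
  apply: leq_sum => a _; rewrite /close_pair.
  case/boolP: [&& _, _, _ & _] => //.
  case/and4P=> u0 v0 /and3P [_ _ /eqP e1] /and3P [juN lvN /eqP e2].
  rewrite /difference_match u0 v0 juN lvN -e1 -e2 addrK eqxx mul1n.
  by rewrite (_ : _ - _ = b (j + u)%N - b j) ?eqxx //; ring.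
rewrite -big_distrl /= -[X in (_ <= X)%N]mul1n leq_mul2r.
by rewrite sum_eq_uniq_le1 ?orbT.
Qed.

Lemma difference_match_unique j u v :
  convex_on c N \/ convex_on (fun l => - c l) N ->
  (\sum_(l < N) (difference_match j l u v : nat) <= 1)%N.
Proof.
move=> cvx; apply: sum_bool_le1 => l1 l2.
move=> /and5P [_ v0 _ l1N /eqP e1] /and5P [_ _ _ l2N /eqP e2].
by apply: val_inj; apply: (step_diff_inj cvx v0 l1N l2N); rewrite e1 e2.
Qed.

Lemma solutions_bound K (A : seq R) :
  (0 < K)%N -> uniq A -> size A = N ->
  convex_on c N \/ convex_on (fun l => - c l) N ->
  (\sum_(a <- A) \sum_(j < N) \sum_(l < N) ((a + b j == c l)%R : nat)
    <= N * ((2 * N) %/ K).+1 + K * K * N)%N.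
Proof.
move=> K0 uA sA cvx.
have pairs_from_row j : (\sum_(a <- A) \sum_(l < N) \sum_(u < K) \sum_(v < K)
    (close_pair a j l u v : nat) <= K * K)%N.
  rewrite exchange_big /=; apply: (@leq_trans
    (\sum_(l < N) \sum_(u < K) \sum_(v < K) difference_match j l u v)%N).
    apply: leq_sum => l _; rewrite exchange_big; apply: leq_sum => u _.
    by rewrite exchange_big; apply: leq_sum => v _; apply: close_pair_sum.
  apply: (@leq_trans (\sum_(u < K) \sum_(v < K) 1)%N); last first.
    by rewrite !sum_nat_const !card_ord muln1.
  rewrite exchange_big; apply: leq_sum => u _; rewrite exchange_big.
  by apply: leq_sum => v _; apply: difference_match_unique.
apply: (@leq_trans (\sum_(a <- A) (((2 * N) %/ K).+1 +
    \sum_(j < N) \sum_(l < N) \sum_(u < K) \sum_(v < K) (close_pair a j l u v : nat)))%N).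
  apply: leq_sum => a _; apply: leq_trans (solutions_split K a) _.
  by rewrite leq_add2r isolated_count.
rewrite big_split big_const_seq count_predT iter_addn_0 sA mulnC leq_add2l.
apply: (@leq_trans (\sum_(j < N) K * K)%N); last by rewrite sum_nat_const card_ord mulnC.
by rewrite exchange_big; apply: leq_sum => j _; apply: pairs_from_row.
Qed.

End SolutionCounting.

Arguments solutions_bound {R N b c} b_incr c_incr {K A}.

(* The bound of [solutions_bound] multiplied by k, free of integer division. *)
Lemma scaled_count_bound (T N k : nat) :
  (T <= N * ((2 * N) %/ k).+1 + k * k * N)%N ->
  (T * k <= 2 * N * N + N * k + k * k * k * N)%N.
Proof. by have := leq_divM (2 * N) k; set q := (_ %/ _)%N; nia. Qed.

Local Open Scope ring_scope.

Lemma five_thirds_bound {R : realFieldType} (T n y k : R) :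
  y ^+ 3 = n -> 1 <= y -> y < k -> k <= y + 1 ->
  T * k <= 2 * n * n + n * k + k * k * k * n -> T <= 7 * y ^+ 5.
Proof.
move=> yn y1 yk ky hT; have k0 : 0 < k by lra.
have y3 : 0 <= y ^+ 3 by rewrite exprn_ge0 //; lra.
have y5 : 0 <= y ^+ 5 by rewrite exprn_ge0 //; lra.
have term1 : 2 * y ^+ 6 <= 2 * y ^+ 5 * k.
  have : 0 <= y ^+ 5 * (k - y) by apply: mulr_ge0 => //; lra.
  by rewrite exprS; nra.
have term2 : y ^+ 3 * k <= y ^+ 5 * k.
  have y2 : 1 <= y ^+ 2 by rewrite expr2; nra.
  have : 0 <= y ^+ 3 * k * (y ^+ 2 - 1) by rewrite !mulr_ge0 //; lra.
  by rewrite (_ : y ^+ 5 = y ^+ 3 * y ^+ 2) -?exprD //; nra.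
have term3 : k ^+ 3 * y ^+ 3 <= 4 * y ^+ 5 * k.
  have k2 : k ^+ 2 <= 4 * y ^+ 2 by rewrite !expr2; nra.
  have : 0 <= y ^+ 3 * k * (4 * y ^+ 2 - k ^+ 2) by rewrite !mulr_ge0 //; lra.
  rewrite (_ : k ^+ 3 = k ^+ 2 * k) -?exprSr //.
  by rewrite (_ : y ^+ 5 = y ^+ 2 * y ^+ 3) -?exprD //; nra.
have rhsE : 2 * n * n + n * k + k * k * k * n =
    2 * y ^+ 6 + y ^+ 3 * k + k ^+ 3 * y ^+ 3 by rewrite -yn; ring.
rewrite rhsE in hT.
by rewrite -(ler_pM2r k0); apply: le_trans hT _; lra.
Qed.

Lemma cube_root_powers {R : realType} (N : nat) :
  (N%:R `^ 3^-1) ^+ 3 = N%:R :> R /\ N%:R `^ (5 / 3) = (N%:R `^ 3^-1) ^+ 5 :> R.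
Proof.
split; rewrite -powR_mulrn ?powR_ge0 // -powRrM; first by rewrite mulVf ?powRr1.
by rewrite mulrC.
Qed.

(* Optimising the block size: if the count T satisfies the bound of
   [solutions_bound] for every k > 0, then taking k = floor (N^(1/3)) + 1
   gives T <= 7 N^(5/3). *)
Lemma count_le_five_thirds {R : realType} (T N : nat) :
  (forall k, (0 < k)%N -> (T <= N * ((2 * N) %/ k).+1 + k * k * N)%N) ->
  T%:R <= 7 * N%:R `^ (5 / 3) :> R.
Proof.
move=> count_bound; have [y3 ->] := cube_root_powers (R := R) N.
set y := N%:R `^ 3^-1 in y3 *.
have /andP [trunc_le y_lt] := truncn_itv (powR_ge0 N%:R 3^-1 : 0 <= y).
have k_le : (Num.truncn y).+1%:R <= y + 1 by rewrite -addn1 natrD lerD2r.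
move: (count_bound _ (ltn0Sn (Num.truncn y))).
set k := (Num.truncn y).+1 in y_lt k_le *; clearbody k.
case: (posnP N) => [-> | N_pos].
  by rewrite !muln0 mul0n leqn0 => /eqP ->; rewrite mulr_ge0 ?exprn_ge0 ?powR_ge0.
move/scaled_count_bound; rewrite -(ler_nat R) !natrD !natrM => count_le.
have y_ge1 : 1 <= y.
  have y0 : 0 <= y := powR_ge0 _ _.
  have : 1 <= y ^+ 3 by rewrite y3 ler1n.
  by rewrite !exprS expr0 mulr1; nra.
exact: five_thirds_bound y3 y_ge1 y_lt k_le count_le.
Qed.

Theorem mainTheorem13 (R : realType) :
  exists K : R, 0 < K /\
    forall (N : nat) (A B C : {fset R}),
      #|` A|%fset = N -> #|` B|%fset = N -> #|` C|%fset = N ->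
      one_convex A -> one_convex B -> one_convex C ->
      (num_solutions A B C)%:R <= K * (N%:R `^ (5 / 3 : R)).
Proof.
exists 7; split => // N A B C cardA cardB cardC _ _ convexC.
pose b j := (sorted_elems B)`_j; pose c l := (sorted_elems C)`_l.
have b_incr j j' : (j < j')%N -> (j' < N)%N -> b j < b j'.
  by rewrite -cardB; apply: sorted_elems_increasing.
have c_incr l l' : (l < l')%N -> (l' < N)%N -> c l < c l'.
  by rewrite -cardC; apply: sorted_elems_increasing.
have gaps_c : convex_on c N \/ convex_on (fun l => - c l) N.
  by rewrite -cardC; apply: one_convex_gaps.
have -> : num_solutions A B C =
    (\sum_(a <- enum_fset A) \sum_(j < N) \sum_(l < N) ((a + b j == c l)%R : nat))%N.
  rewrite /num_solutions; apply: eq_bigr => a _; rewrite sum_sorted_elems cardB.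
  by apply: eq_bigr => j _; rewrite sum_sorted_elems cardC.
apply: count_le_five_thirds => k k_gt0.
exact: (solutions_bound b_incr c_incr k_gt0 (fset_uniq A) cardA gaps_c).
Qed.
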